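(* Let $\theta\in\mathbb R$. Let $h:[0,1]\to[0,1]$ be Lipschitz with $\min(\alpha,\beta)\le h\le\max(\alpha,\beta)$ and let $\nu^N_h$ be the Bernoulli product measure on $\Omega_N$ with $\nu^N_h(\eta_x=1)=h(\frac xN)$. There exists $C>0$, independent of $f$ and $N$, such that for every density $f$ with respect to $\nu^N_h$, $$\int (L_N^\ell\sqrt f)\sqrt f\,d\nu^N_h\le-\frac14D_N^\ell(\sqrt f,\nu^N_h)+\frac{C\kappa}{N^\theta}\sum_{x\in\Lambda_N}r_N^-(\tfrac xN)\big(h(\tfrac xN)-\alpha\big)^2,$$ $$\int (L_N^r\sqrt f)\sqrt f\,d\nu^N_h\le-\frac14D_N^r(\sqrt f,\nu^N_h)+\frac{C\kappa}{N^\theta}\sum_{x\in\Lambda_N}r_N^+(\tfrac xN)\big(h(\tfrac xN)-\beta\big)^2.$$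
   Context: $p:\mathbb Z\to[0,1]$ is a symmetric transition probability with finite variance; $\alpha,\beta\in(0,1)$, $\kappa>0$. $\Lambda_N=\{1,\dots,N-1\}$, $\Omega_N=\{0,1\}^{\Lambda_N}$; $\sigma^x\eta$ flips the value at $x$; $c_x(\eta;a)=\eta_x(1-a)+(1-\eta_x)a$. $(L_N^\ell f)(\eta)=\frac{\kappa}{N^\theta}\sum_{x\in\Lambda_N,y\le0}p(x-y)c_x(\eta;\alpha)[f(\sigma^x\eta)-f(\eta)]$, $(L_N^rf)(\eta)=\frac{\kappa}{N^\theta}\sum_{x\in\Lambda_N,y\ge N}p(x-y)c_x(\eta;\beta)[f(\sigma^x\eta)-f(\eta)]$. $r_N^-(\frac xN)=\sum_{y\ge x}p(y)$, $r_N^+(\frac xN)=\sum_{y\le x-N}p(y)$. For a probability $\mu$ and density $f$: $I^a_x(\sqrt f,\mu)=\int c_x(\eta;a)(\sqrt{f(\sigma^x\eta)}-\sqrt{f(\eta)})^2d\mu$, $D_N^\ell(\sqrt f,\mu)=\frac{\kappa}{N^\theta}\sum_{x\in\Lambda_N}r_N^-(\frac xN)I^\alpha_x(\sqrt f,\mu)$, $D_N^r(\sqrt f,\mu)=\frac{\kappa}{N^\theta}\sum_{x\in\Lambda_N}r_N^+(\frac xN)I^\beta_x(\sqrt f,\mu)$. A density w.r.t. $\nu$ is $f\ge0$ with $\int f d\nu=1$. *)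

From Stdlib Require Import Reals ZArith.
From Coquelicot Require Import Coquelicot.
From mathcomp Require Import ssreflect ssrfun ssrbool eqtype ssrnat seq choice fintype finfun bigop.

Set Implicit Arguments.
Unset Strict Implicit.
Unset Printing Implicit Defensive.

Local Open Scope R_scope.

(* p : Z -> [0,1] is a symmetric transition probability with finite variance.
   Sums over Z are split as (k >= 0) and (k < 0, i.e. -(k+1)). *)
Definition transition_prob (p : Z -> R) : Prop :=
  (forall z, 0 <= p z <= 1) /\
  ex_series (fun k : nat => p (Z.of_nat k)) /\
  ex_series (fun k : nat => p (- Z.of_nat k.+1)%Z) /\
  Series (fun k : nat => p (Z.of_nat k)) +
  Series (fun k : nat => p (- Z.of_nat k.+1)%Z) = 1.

Definition symmetric_p (p : Z -> R) : Prop := forall z, p (- z)%Z = p z.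

Definition finite_variance (p : Z -> R) : Prop :=
  ex_series (fun k : nat => IZR (Z.of_nat k) ^ 2 * p (Z.of_nat k)) /\
  ex_series (fun k : nat => IZR (- Z.of_nat k.+1)%Z ^ 2 * p (- Z.of_nat k.+1)%Z).

(* Lambda_N = {1,...,N-1} is indexed by i : 'I_(N.-1), site(i) = i+1. *)
Definition site {N : nat} (i : 'I_N.-1) : nat := i.+1.

Definition config (N : nat) := {ffun 'I_N.-1 -> bool}.

Definition b2R (b : bool) : R := if b then 1 else 0.

Definition flip {N : nat} (x : 'I_N.-1) (eta : config N) : config N :=
  [ffun y => if y == x then ~~ eta y else eta y].

Definition cx {N : nat} (eta : config N) (x : 'I_N.-1) (a : R) : R :=
  b2R (eta x) * (1 - a) + (1 - b2R (eta x)) * a.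

Definition pt (N : nat) (x : 'I_N.-1) : R := INR (site x) / INR N.

Definition Npow (N : nat) (theta : R) : R := Rpower (INR N) theta.

Definition sum_sites (N : nat) (F : 'I_N.-1 -> R) : R :=
  \big[Rplus/0]_(x : 'I_N.-1) F x.

Definition nu_h (h : R -> R) (N : nat) (eta : config N) : R :=
  \big[Rmult/1]_(x : 'I_N.-1) (if eta x then h (pt x) else 1 - h (pt x)).

Definition integral (h : R -> R) (N : nat) (g : config N -> R) : R :=
  \big[Rplus/0]_(eta : config N) (nu_h h eta * g eta).

Definition is_density (h : R -> R) (N : nat) (f : config N -> R) : Prop :=
  (forall eta, 0 <= f eta) /\ integral h f = 1.

(* Left reservoir generator: sum over y <= 0, written y = -k, k : nat. *)
Definition L_left (p : Z -> R) (kappa theta alpha : R) (N : nat)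
    (f : config N -> R) (eta : config N) : R :=
  kappa / Npow N theta *
  sum_sites (fun x =>
    Series (fun k : nat =>
      p (Z.of_nat (site x) - (- Z.of_nat k))%Z * cx eta x alpha *
      (f (flip x eta) - f eta))).

(* Right reservoir generator: sum over y >= N, written y = N + k, k : nat. *)
Definition L_right (p : Z -> R) (kappa theta beta : R) (N : nat)
    (f : config N -> R) (eta : config N) : R :=
  kappa / Npow N theta *
  sum_sites (fun x =>
    Series (fun k : nat =>
      p (Z.of_nat (site x) - (Z.of_nat N + Z.of_nat k))%Z * cx eta x beta *
      (f (flip x eta) - f eta))).

Definition r_minus (p : Z -> R) (N : nat) (x : 'I_N.-1) : R :=
  Series (fun k : nat => p (Z.of_nat (site x) + Z.of_nat k)%Z).

Definition r_plus (p : Z -> R) (N : nat) (x : 'I_N.-1) : R :=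
  Series (fun k : nat => p (Z.of_nat (site x) - Z.of_nat N - Z.of_nat k)%Z).

Definition Ix (h : R -> R) (N : nat) (a : R) (x : 'I_N.-1) (g : config N -> R) : R :=
  integral h (fun eta => cx eta x a * (g (flip x eta) - g eta) ^ 2).

Definition D_left (p : Z -> R) (kappa theta alpha : R) (h : R -> R) (N : nat)
    (g : config N -> R) : R :=
  kappa / Npow N theta * sum_sites (fun x => r_minus p x * Ix h alpha x g).

Definition D_right (p : Z -> R) (kappa theta beta : R) (h : R -> R) (N : nat)
    (g : config N -> R) : R :=
  kappa / Npow N theta * sum_sites (fun x => r_plus p x * Ix h beta x g).

Definition lipschitz_on01 (h : R -> R) : Prop :=
  exists L : R, forall u v, 0 <= u <= 1 -> 0 <= v <= 1 ->
    Rabs (h u - h v) <= L * Rabs (u - v).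

(* Summing the reservoir jumps over y turns the generator into a sum over sites x
   with rates r_N^-(x/N), so it suffices to bound each site separately.  Pair every
   configuration eta with its flip at x.  On such a pair the term at x is a
   two-point expression in sqrt f(eta) and sqrt f(sigma^x eta): one half of it is
   minus the two-point Dirichlet form, the other is antisymmetric with weight
   h(x/N) - a, the bias of nu_h against the reservoir density a.  By Young's
   inequality half of the Dirichlet form absorbs the antisymmetric part up to
   (h(x/N) - a)^2 times the nu_h-mass of f on the pair, and these masses add up
   to 1.  The constant C = 1/(2 d^2) only depends on the distance d of alpha and
   beta (hence of h) to {0, 1}. *)
From HB Require Import structures.
From Stdlib Require Import Reals ZArith Lra Psatz.
From Coquelicot Require Import Coquelicot.
From mathcomp Require Import ssreflect ssrfun ssrbool eqtype ssrnat seq choice fintype finfun bigop.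
Set Implicit Arguments.
Unset Strict Implicit.
Unset Printing Implicit Defensive.
Local Open Scope R_scope.

Lemma RplusA : associative Rplus. Proof. by move=> x y z; rewrite Rplus_assoc. Qed.
Lemma RmultA : associative Rmult. Proof. by move=> x y z; rewrite Rmult_assoc. Qed.
HB.instance Definition _ := Monoid.isComLaw.Build R 0 Rplus RplusA Rplus_comm Rplus_0_l.
HB.instance Definition _ := Monoid.isComLaw.Build R 1 Rmult RmultA Rmult_comm Rmult_1_l.
HB.instance Definition _ := Monoid.isMulLaw.Build R 0 Rmult Rmult_0_l Rmult_0_r.
HB.instance Definition _ := Monoid.isAddLaw.Build R Rmult Rplus Rmult_plus_distr_r Rmult_plus_distr_l.

Lemma Rle_big_sum (I : finType) (F G : I -> R) :
  (forall i, F i <= G i) -> \big[Rplus/0]_(i : I) F i <= \big[Rplus/0]_(i : I) G i.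
Proof.
by move=> FG; apply: (big_ind2 (fun a b => a <= b)) => [| * | i _]; [lra | lra | ].
Qed.

Lemma big_prod_ge0 (I : finType) (P : pred I) (F : I -> R) :
  (forall i, 0 <= F i) -> 0 <= \big[Rmult/1]_(i : I | P i) F i.
Proof.
by move=> F0; apply: (big_ind (fun a => 0 <= a)) => [| a b | i _]; [lra | nra | ].
Qed.

Lemma Rle_big_sum_involutive (I : finType) (s : I -> I) (F G : I -> R) :
  involutive s -> (forall i, F i + F (s i) <= G i + G (s i)) ->
  \big[Rplus/0]_(i : I) F i <= \big[Rplus/0]_(i : I) G i.
Proof.
move=> sK FG.
have pair_sum (H : I -> R) :
    \big[Rplus/0]_(i : I) (H i + H (s i)) = 2 * \big[Rplus/0]_(i : I) H i.
  rewrite big_split /=.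
  have -> : \big[Rplus/0]_(i : I) H (s i) = \big[Rplus/0]_(i : I) H i.
    by rewrite [RHS](reindex_inj (can_inj sK)).
  ring.
have := Rle_big_sum FG; rewrite !pair_sum; lra.
Qed.

Lemma Series_ge0 (a : nat -> R) : (forall n, 0 <= a n) -> 0 <= Series a.
Proof.
move=> a0; rewrite /Series.
have : Rbar_le (Lim_seq (fun _ => 0)) (Lim_seq (sum_n a)).
  apply: Lim_seq_le_loc; exists 0%nat => n _.
  apply: Rle_trans (sum_n_m_le _ _ 0 n a0).
  by right; symmetry; exact: sum_n_m_const_zero.
by rewrite Lim_seq_const; case: (Lim_seq (sum_n a)) => //= r; lra.
Qed.

Lemma Young_two_point (rho a d u v : R) :
  0 < d -> d <= rho <= 1 - d -> d <= a <= 1 - d ->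
  rho * (1 - a) * (v - u) * u + (1 - rho) * a * (u - v) * v <=
  - (1 / 4) * (rho * (1 - a) * (v - u) ^ 2 + (1 - rho) * a * (u - v) ^ 2)
  + / (2 * d ^ 2) * (rho - a) ^ 2 * (rho * u ^ 2 + (1 - rho) * v ^ 2).
Proof.
move=> d0 rho_d a_d.
set S := rho * (1 - a) + (1 - rho) * a.
set t := (rho - a) * (u + v) / 2.
have S_d : d <= S by rewrite /S; nra.
(* Young's inequality in certificate form, using [d <= S] and [d <= rho <= 1 - d]. *)
apply/Rge_le/Rminus_ge/Rle_ge.
rewrite [X in 0 <= X](_ : _ =
    ((S - d) * d ^ 2 * (v - u) ^ 2 / 2 + 2 * d * (d * (v - u) / 2 - t) ^ 2
     + (rho - a) ^ 2 * ((rho - d) * u ^ 2 + (1 - rho - d) * v ^ 2 + d * (u - v) ^ 2 / 2))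
    / (2 * d ^ 2)); last by rewrite /S /t; field; lra.
apply: Rdiv_le_0_compat; last by nra.
have Sd2 : 0 <= (S - d) * d ^ 2 by have := pow2_ge_0 d; nra.
have weights : 0 <= (rho - d) * u ^ 2 + (1 - rho - d) * v ^ 2 + d * (u - v) ^ 2 / 2.
  by have := pow2_ge_0 u; have := pow2_ge_0 v; have := pow2_ge_0 (u - v); nra.
have := pow2_ge_0 (v - u); have := pow2_ge_0 (d * (v - u) / 2 - t).
have := pow2_ge_0 (rho - a); nra.
Qed.

Lemma flipK N (x : 'I_N.-1) : involutive (flip x).
Proof. by move=> e; apply/ffunP => y; rewrite !ffunE; case: eqP => // ->; rewrite negbK. Qed.

Lemma flip_at N (x : 'I_N.-1) (e : config N) : flip x e x = ~~ e x.
Proof. by rewrite ffunE eqxx. Qed.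

Definition site_weight (h : R -> R) N (e : config N) (y : 'I_N.-1) : R :=
  if e y then h (pt y) else 1 - h (pt y).

Definition nu_rest (h : R -> R) N (x : 'I_N.-1) (e : config N) : R :=
  \big[Rmult/1]_(y | y != x) site_weight h e y.

Lemma nu_hD1 h N (x : 'I_N.-1) (e : config N) :
  nu_h h e = site_weight h e x * nu_rest h x e.
Proof. exact: (bigD1 x). Qed.

Lemma nu_rest_flip h N (x : 'I_N.-1) (e : config N) :
  nu_rest h x (flip x e) = nu_rest h x e.
Proof. by apply: eq_bigr => y y_x; rewrite /site_weight ffunE (negbTE y_x). Qed.

Lemma nu_rest_ge0 h N (x : 'I_N.-1) (e : config N) :
  (forall y : 'I_N.-1, 0 <= h (pt y) <= 1) -> 0 <= nu_rest h x e.
Proof.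
by move=> h01; apply: big_prod_ge0 => y; rewrite /site_weight; case: (e y); have := h01 y; lra.
Qed.

Lemma integral_lin h N (c1 c2 : R) (F G : config N -> R) :
  integral h (fun e => c1 * F e + c2 * G e) = c1 * integral h F + c2 * integral h G.
Proof. by rewrite /integral !big_distrr -big_split; apply: eq_bigr => e _ /=; ring. Qed.

Lemma integral_ext h N (F G : config N -> R) :
  (forall e, F e = G e) -> integral h F = integral h G.
Proof. by move=> FG; apply: eq_bigr => e _; rewrite FG. Qed.

Lemma boundary_site_bound h N (x : 'I_N.-1) (g : config N -> R) (a d : R) :
  0 < d -> (forall y : 'I_N.-1, d <= h (pt y) <= 1 - d) -> d <= a <= 1 - d ->
  integral h (fun e => cx e x a * (g (flip x e) - g e) * g e) <=
  - (1 / 4) * Ix h a x g + / (2 * d ^ 2) * (h (pt x) - a) ^ 2 * integral h (fun e => g e ^ 2).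
Proof.
move=> d0 h_d a_d; rewrite /Ix -integral_lin.
apply: (Rle_big_sum_involutive (flipK x)) => e.
have rest0 : 0 <= nu_rest h x e by apply: nu_rest_ge0 => y; have := h_d y; lra.
rewrite !(nu_hD1 h x) nu_rest_flip /site_weight /cx flip_at flipK.
(* On the pair {e, flip x e} both sides are [Young_two_point] scaled by [nu_rest h x e]. *)
have := Young_two_point (g e) (g (flip x e)) d0 (h_d x) a_d.
have := Young_two_point (g (flip x e)) (g e) d0 (h_d x) a_d.
case: (e x) => /=; rewrite /b2R; nra.
Qed.

Definition boundary_generator N (k : R) (r : 'I_N.-1 -> R) (a : R)
    (g : config N -> R) (e : config N) : R :=
  k * sum_sites (fun x => r x * (cx e x a * (g (flip x e) - g e))).

Definition boundary_dirichlet (h : R -> R) N (k : R) (r : 'I_N.-1 -> R) (a : R)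
    (g : config N -> R) : R :=
  k * sum_sites (fun x => r x * Ix h a x g).

Lemma L_leftE p kappa theta alpha N (g : config N -> R) (e : config N) :
  L_left p kappa theta alpha g e =
  boundary_generator (kappa / Npow N theta) (@r_minus p N) alpha g e.
Proof.
congr (_ * _); apply: eq_bigr => x _; rewrite /r_minus -Series_scal_r.
by apply: Series_ext => n; rewrite Z.sub_opp_r; ring.
Qed.

Lemma L_rightE p kappa theta beta N (g : config N -> R) (e : config N) :
  L_right p kappa theta beta g e =
  boundary_generator (kappa / Npow N theta) (@r_plus p N) beta g e.
Proof.
congr (_ * _); apply: eq_bigr => x _; rewrite /r_plus -Series_scal_r.
by apply: Series_ext => n; rewrite Z.sub_add_distr; ring.
Qed.

Lemma boundary_generator_bound h N (f : config N -> R) (k a d : R) (r : 'I_N.-1 -> R) :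
  is_density h f -> 0 < d -> (forall y : 'I_N.-1, d <= h (pt y) <= 1 - d) ->
  d <= a <= 1 - d -> 0 <= k -> (forall x, 0 <= r x) ->
  let g := fun e => sqrt (f e) in
  integral h (fun e => boundary_generator k r a g e * g e) <=
  - (1 / 4) * boundary_dirichlet h k r a g
  + / (2 * d ^ 2) * k * sum_sites (fun x => r x * (h (pt x) - a) ^ 2).
Proof.
move=> [f0 f1] d0 h_d a_d k0 r0 g.
have g2 : integral h (fun e => g e ^ 2) = 1.
  by rewrite -f1; apply: integral_ext => e; rewrite /g pow2_sqrt.
have -> : integral h (fun e => boundary_generator k r a g e * g e) =
    k * sum_sites (fun x => r x * integral h (fun e => cx e x a * (g (flip x e) - g e) * g e)).
  rewrite /integral /boundary_generator /sum_sites.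
  transitivity (\big[Rplus/0]_(e : config N) \big[Rplus/0]_(x : 'I_N.-1)
      (k * r x * (nu_h h e * (cx e x a * (g (flip x e) - g e) * g e)))).
    apply: eq_bigr => e _; rewrite big_distrr big_distrl big_distrr.
    by apply: eq_bigr => x _ /=; ring.
  rewrite exchange_big big_distrr; apply: eq_bigr => x _.
  by rewrite !big_distrr; apply: eq_bigr => e _ /=; ring.
apply: (Rle_trans _ (k * sum_sites (fun x => r x *
  (- (1 / 4) * Ix h a x g + / (2 * d ^ 2) * (h (pt x) - a) ^ 2 * integral h (fun e => g e ^ 2))))).
  apply: Rmult_le_compat_l k0 _; apply: Rle_big_sum => x.
  exact/Rmult_le_compat_l/boundary_site_bound.
right; rewrite g2 /boundary_dirichlet /sum_sites !big_distrr -big_split.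
by apply: eq_bigr => x _ /=; ring.
Qed.

Lemma pt01 N (x : 'I_N.-1) : 0 <= pt x <= 1.
Proof.
have /leP xN : (x.+1 <= N)%nat := leq_trans (ltn_ord x) (leq_pred N).
have N0 : 0 < INR N by apply: lt_0_INR; lia.
rewrite /pt /site; split; first by apply: Rdiv_le_0_compat; [apply: pos_INR | ].
by apply/Rle_div_l => //; rewrite Rmult_1_l; apply: le_INR.
Qed.

Definition margin (a b : R) : R := Rmin (Rmin a (1 - a)) (Rmin b (1 - b)).

Lemma margin_gt0 a b : 0 < a < 1 -> 0 < b < 1 -> 0 < margin a b.
Proof. by rewrite /margin /Rmin; repeat destruct Rle_dec; lra. Qed.

Lemma margin_le a b y :
  Rmin a b <= y <= Rmax a b -> margin a b <= y <= 1 - margin a b.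
Proof. by rewrite /margin /Rmin /Rmax; repeat destruct Rle_dec; lra. Qed.

Theorem corollary5p4 (p : Z -> R) (alpha beta kappa theta : R) (h : R -> R) :
  transition_prob p -> symmetric_p p -> finite_variance p ->
  0 < alpha < 1 -> 0 < beta < 1 -> 0 < kappa ->
  lipschitz_on01 h ->
  (forall u, 0 <= u <= 1 -> Rmin alpha beta <= h u <= Rmax alpha beta) ->
  exists C : R, 0 < C /\
    forall (N : nat) (f : config N -> R), is_density h f ->
      integral h (fun eta => L_left p kappa theta alpha (fun e => sqrt (f e)) eta
                             * sqrt (f eta))
        <= - (1 / 4) * D_left p kappa theta alpha h (fun e => sqrt (f e))
           + C * kappa / Npow N theta *
             sum_sites (fun x : 'I_N.-1 => r_minus p x * (h (pt x) - alpha) ^ 2)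
      /\
      integral h (fun eta => L_right p kappa theta beta (fun e => sqrt (f e)) eta
                             * sqrt (f eta))
        <= - (1 / 4) * D_right p kappa theta beta h (fun e => sqrt (f e))
           + C * kappa / Npow N theta *
             sum_sites (fun x : 'I_N.-1 => r_plus p x * (h (pt x) - beta) ^ 2).
Proof.
move=> [p01 _] _ _ alpha01 beta01 kappa0 _ h_range.
have d0 := margin_gt0 alpha01 beta01.
set d := margin alpha beta in d0 *.
have alpha_d : d <= alpha <= 1 - d by apply: margin_le; split; [apply: Rmin_l | apply: Rmax_l].
have beta_d : d <= beta <= 1 - d by apply: margin_le; split; [apply: Rmin_r | apply: Rmax_r].
exists (/ (2 * d ^ 2)); split; first by apply: Rinv_0_lt_compat; have := pow_lt d 2 d0; lra.
move=> N f f_dens.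
have h_d (y : 'I_N.-1) : d <= h (pt y) <= 1 - d by apply/margin_le/h_range/pt01.
have k0 : 0 <= kappa / Npow N theta by apply: Rdiv_le_0_compat; [lra | apply: exp_pos].
have p0 (z : Z) : 0 <= p z by case: (p01 z).
have -> : / (2 * d ^ 2) * kappa / Npow N theta = / (2 * d ^ 2) * (kappa / Npow N theta).
  by rewrite /Rdiv Rmult_assoc.
split.
- erewrite integral_ext; last by move=> e; rewrite L_leftE.
  by apply: boundary_generator_bound => // x; apply: Series_ge0.
- erewrite integral_ext; last by move=> e; rewrite L_rightE.
  by apply: boundary_generator_bound => // x; apply: Series_ge0.
Qed.
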